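(* Let $\pi$ be a model with data space $Y$ and parameter space $\Theta$, $\phi$ a posterior family and $f$ a test quantity. (1) If $\pi$ has no ties with respect to $f$, then for every $y$ the quantile function $C^{-1}_f(\cdot\mid y)$ is the inverse of $C_f(\cdot\mid y)$, and $C_f(\cdot\mid y)$ is a surjection onto $[0,1]$. (2) If $\phi$ has no ties with respect to $f$, then for every $y$ the quantile function $C^{-1}_{\phi,f}(\cdot\mid y)$ is the inverse of $C_{\phi,f}(\cdot\mid y)$, and $C_{\phi,f}(\cdot\mid y)$ is a surjection onto $[0,1]$. (3) If both $\pi$ and $\phi$ have no ties with respect to $f$, then $q_{\phi,f}(x\mid y)=C_f\big(C^{-1}_{\phi,f}(x\mid y)\mid y\big)$ and $q_{\phi,f}(\cdot\mid y)$ is a bijection from $[0,1]$ to $[0,1]$.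
   Context: Model $\pi$: prior density $\pi_{\text{prior}}(\theta)$ on $\Theta$, observation density $\pi_{\text{obs}}(y\mid\theta)$ on $Y$, $\pi_{\text{marg}}(y)=\int_\Theta\pi_{\text{obs}}(y\mid\theta)\pi_{\text{prior}}(\theta)\,\mathrm{d}\theta$, $\pi_{\text{post}}(\theta\mid y)=\pi_{\text{obs}}(y\mid\theta)\pi_{\text{prior}}(\theta)/\pi_{\text{marg}}(y)$. A posterior family is $\phi:\Theta\times Y\to\mathbb{R}^+$ with $\int_\Theta\phi(\theta\mid y)\,\mathrm{d}\theta=1$ for all $y$; a test quantity is a measurable $f:\Theta\times Y\to\mathbb{R}$. On the extended reals $\bar{\mathbb{R}}$: $C_{\phi,f}(s\mid y)=\int_\Theta\mathbb{I}[f(\theta,y)\le s]\phi(\theta\mid y)\,\mathrm{d}\theta$, $C_f(s\mid y)=\int_\Theta\mathbb{I}[f(\theta,y)\le s]\pi_{\text{post}}(\theta\mid y)\,\mathrm{d}\theta$, $C^{-1}_{\phi,f}(x\mid y)=\inf\{s: x\le C_{\phi,f}(s\mid y)\}$, $C^{-1}_f(x\mid y)=\inf\{s:x\le C_f(s\mid y)\}$, $D_{\phi,f}(s\mid y)=\int_\Theta\mathbb{I}[f(\theta,y)=s]\phi(\theta\mid y)\,\mathrm{d}\theta$, $D_f(s\mid y)=\int_\Theta\mathbb{I}[f(\theta,y)=s]\pi_{\text{post}}(\theta\mid y)\,\mathrm{d}\theta$. $\pi$ has ties w.r.t. $f$ if $D_f(f(\tilde\theta,y)\mid y)>0$ for some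 $y,\tilde\theta$; $\phi$ has ties w.r.t. $f$ if $D_{\phi,f}(f(\tilde\theta,y)\mid y)>0$ for some $y,\tilde\theta$. With $U\sim\mathrm{uniform}[0,1]$, $r_{\phi,f}(x\mid\tilde\theta,y)=\Pr\big(C_{\phi,f}(f(\tilde\theta,y)\mid y)-U\,D_{\phi,f}(f(\tilde\theta,y)\mid y)\le x\big)$, $q_{\phi,f}(x\mid y)=\int_\Theta\pi_{\text{post}}(\tilde\theta\mid y)r_{\phi,f}(x\mid\tilde\theta,y)\,\mathrm{d}\tilde\theta$. *)

From HB Require Import structures.
From mathcomp Require Import all_boot all_order all_algebra.
From mathcomp Require Import all_classical all_reals all_analysis.
Set Implicit Arguments. Unset Strict Implicit. Unset Printing Implicit Defensive.
Import Order.TTheory GRing.Theory Num.Theory.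
Local Open Scope classical_set_scope.
Local Open Scope ring_scope.

Section Defs.
Context {R : realType} {dT : measure_display} {T : measurableType dT}
  {dY : measure_display} {Y : measurableType dY}.
Variable mu : {measure set T -> \bar R}.

(* Conventions: a function  g : T -> Y -> R  stands for theta, y |-> g(theta | y);
   obs t y = pi_obs(y | t). *)

Definition pp_marg (prior : T -> R) (obs : T -> Y -> R) (y : Y) : \bar R :=
  (\int[mu]_t (obs t y * prior t)%:E)%E.

Definition pp_post (prior : T -> R) (obs : T -> Y -> R) (t : T) (y : Y) : R :=
  obs t y * prior t / fine (pp_marg prior obs y).

(* C_{g,f}(s | y) for a density family g (C_f is the case g = pp_post) *)
Definition pp_cdf (g : T -> Y -> R) (f : T -> Y -> R) (y : Y) (s : \bar R) : R :=
  fine (\int[mu]_t ((((f t y)%:E <= s)%E)%:R * g t y)%:E)%E.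

Definition pp_qf (g : T -> Y -> R) (f : T -> Y -> R) (y : Y) (x : R) : \bar R :=
  ereal_inf [set s : \bar R | (x%:E <= (pp_cdf g f y s)%:E)%E].

Definition pp_atom (g : T -> Y -> R) (f : T -> Y -> R) (y : Y) (s : R) : R :=
  fine (\int[mu]_t (((f t y == s))%:R * g t y)%:E)%E.

Definition pp_has_ties (g : T -> Y -> R) (f : T -> Y -> R) : Prop :=
  exists (y : Y) (t : T), 0 < pp_atom g f y (f t y).

(* r_{phi,f}(x | t, y) = Pr(C - U D <= x), U ~ uniform[0,1] (Lebesgue measure on [0,1]) *)
Definition pp_rk (phi : T -> Y -> R) (f : T -> Y -> R) (x : R) (t : T) (y : Y) : R :=
  fine (@lebesgue_measure R
    ([set u : R | 0 <= u <= 1] `&`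
     [set u : R | pp_cdf phi f y (f t y)%:E - u * pp_atom phi f y (f t y) <= x])).

Definition pp_qk (prior : T -> R) (obs : T -> Y -> R) (phi : T -> Y -> R)
  (f : T -> Y -> R) (x : R) (y : Y) : R :=
  fine (\int[mu]_t (pp_post prior obs t y * pp_rk phi f x t y)%:E)%E.

End Defs.

From HB Require Import structures.
From mathcomp Require Import all_boot all_order all_algebra.
From mathcomp Require Import all_classical all_reals all_analysis.
From mathcomp Require Import measurable_realfun.
Import Order.TTheory GRing.Theory Num.Theory.
Local Open Scope classical_set_scope.
Local Open Scope ring_scope.

(* For a probability P and a measurable h, let C(s) = P{h <= s} on the extended
   reals and Q(x) = inf {s | x <= C(s)}.  Continuity of P from above makes C
   right-continuous, whence x <= C(Q(x)); when P has no atoms along h,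
   continuity from below makes C left-continuous as well, whence C(Q(x)) <= x.
   So C maps onto [0, 1] with right inverse Q: this is (1) and (2) for the
   posterior and for phi, both being probabilities with densities.
   Without ties the randomised rank C_phi(f) - U D_phi(f) is just C_phi(f),
   so q(x) is the posterior mass of {C_phi(f) <= x}.  This sublevel set of the
   nondecreasing C_phi is a ray {s <= b} with C_phi(b) = x = C_phi(Q_phi(x)),
   so {Q_phi(x) < f <= b} is phi-null; positive densities make the posterior
   and phi equivalent to mu, hence to each other, and the set is also
   posterior-null: q(x) = C(Q_phi(x)).  The same transfer of null level sets
   between the two measures makes q injective and onto on [0, 1]. *)

(* The proof arguments are unused in the body; carrying them lets canonical
   structure inference find the probability instance declared below. *)
Definition density_probability {d} {T : measurableType d} {R : realType}
    (mu : {measure set T -> \bar R}) {g : T -> R}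
    (mg : measurable_fun setT g) (g0 : forall t, 0 <= g t)
    (g1 : (\int[mu]_t (g t)%:E = 1)%E) : set T -> \bar R :=
  fun A => (\int[mu]_(t in A) (g t)%:E)%E.

Section density_probability.
Context {d} {T : measurableType d} {R : realType} (mu : {measure set T -> \bar R}).
Local Open Scope ereal_scope.

Lemma integral_gt0_measure0 {g : T -> R} {A : set T} :
  measurable_fun setT g -> (forall t, (0 < g t)%R) -> measurable A ->
  \int[mu]_(t in A) (g t)%:E = 0 -> mu A = 0.
Proof.
move=> mg g_gt0 mA intA0.
have mgA : measurable_fun A (fun t => (g t)%:E).
  exact/measurable_EFinP/(measurable_funS _ _ mg).
have [N [mN N0 AN]] : (fun t => (g t)%:E) = cst 0 %[ae mu in A].
  apply/(ae_eq_integral_abs mu mA mgA); rewrite -intA0.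
  by apply: eq_integral => t _; rewrite gee0_abs // lee_fin ltW.
apply/eqP; rewrite -measure_le0 -N0 le_measure ?inE // => t At.
by apply: AN => /(_ At) /= [gt0]; have := g_gt0 t; rewrite gt0 ltxx.
Qed.

Variables (g : T -> R) (mg : measurable_fun setT g) (g0 : forall t, (0 <= g t)%R)
  (g1 : \int[mu]_t (g t)%:E = 1).

Local Notation P := (density_probability mu mg g0 g1).

Let P0 : P set0 = 0. Proof. exact: integral_set0. Qed.

Let P_ge0 A : 0 <= P A. Proof. by apply: integral_ge0 => t _; rewrite lee_fin. Qed.

Let P_sigma_additive : semi_sigma_additive P.
Proof.
by apply: semi_sigma_additive_nng_induced => [|t]; [exact/measurable_EFinP|rewrite lee_fin].
Qed.

HB.instance Definition _ := isMeasure.Build _ _ _ P P0 P_ge0 P_sigma_additive.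

HB.instance Definition _ := Measure_isProbability.Build _ _ _ P g1.

Lemma integral_indicator_density (B : T -> bool) :
  \int[mu]_t ((B t)%:R * g t)%:E = P [set t | B t].
Proof.
rewrite [RHS]integral_mkcond; apply: eq_integral => t _; rewrite /patch.
have [Bt|nBt] := boolP (B t); first by rewrite mem_set // mul1r.
by rewrite ifF ?mul0r //; apply: memNset; apply/negP.
Qed.

Lemma density_probability_dominated : P `<< mu.
Proof.
apply/null_content_dominatesP => A mA muA0; apply: null_set_integral => //.
exact/measurable_EFinP/(measurable_funS _ _ mg).
Qed.

Lemma density_probability_dominates : (forall t, (0 < g t)%R) -> mu `<< P.
Proof.
move=> g_gt0; apply/null_content_dominatesP => A mA PA0.
exact: integral_gt0_measure0 mg g_gt0 mA PA0.
Qed.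

End density_probability.

Section ereal_cdf.
Context {d} {T : measurableType d} {R : realType} (P : probability T R) (h : T -> R).
Local Open Scope ereal_scope.

Definition ereal_cdf (s : \bar R) : \bar R := P [set t | (h t)%:E <= s].

Definition quantile (x : R) : \bar R := ereal_inf [set s | x%:E <= ereal_cdf s].

Definition atomless : Prop := forall r, P [set t | h t = r] = 0.

Hypothesis mh : measurable_fun setT h.

Lemma measurable_ereal_cdf_set s : measurable [set t | (h t)%:E <= s].
Proof.
rewrite -[X in measurable X]setTI.
by apply: measurable_lee => //; exact/measurable_EFinP.
Qed.

Lemma measurable_level_set r : measurable [set t | h t = r].
Proof. by have := mh measurableT [set r] (measurable_set1 r); rewrite setTI. Qed.

Lemma ereal_cdf_ge0 s : 0 <= ereal_cdf s. Proof. exact: measure_ge0. Qed.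

Lemma ereal_cdf_le1 s : ereal_cdf s <= 1.
Proof. exact/probability_le1/measurable_ereal_cdf_set. Qed.

Lemma ereal_cdf_fin_num s : ereal_cdf s \is a fin_num.
Proof. exact/fin_num_measure/measurable_ereal_cdf_set. Qed.

Lemma fine_ereal_cdf_itv s : fine (ereal_cdf s) \in `[0%R, 1%R].
Proof.
rewrite in_itv /= fine_ge0 ?ereal_cdf_ge0 //=.
by rewrite -lee_fin fineK ?ereal_cdf_fin_num ?ereal_cdf_le1.
Qed.

Lemma ereal_cdfNy : ereal_cdf -oo = 0.
Proof.
rewrite /ereal_cdf (_ : [set t | _] = set0) ?measure0 //.
by apply/seteqP; split => t //=; rewrite leeNy_eq.
Qed.

Lemma ereal_cdfy : ereal_cdf +oo = 1.
Proof.
rewrite /ereal_cdf (_ : [set t | _] = setT) ?probability_setT //.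
by apply/seteqP; split => t //= _; rewrite leey.
Qed.

Lemma le_ereal_cdf {s1 s2} : s1 <= s2 -> ereal_cdf s1 <= ereal_cdf s2.
Proof.
move=> s12; apply: le_measure; last by move=> t /= /le_trans; apply.
all: by rewrite inE; exact: measurable_ereal_cdf_set.
Qed.

Lemma cvg_ereal_cdf_nonincreasing (s : (\bar R)^nat) : nonincreasing_seq s ->
  ereal_cdf (s n) @[n --> \oo] --> P (\bigcap_n [set t | (h t)%:E <= s n]).
Proof.
move=> s_ni; apply: nonincreasing_cvg_mu.
- by rewrite ltey_eq fin_num_measure //; exact: measurable_ereal_cdf_set.
- by move=> n; exact: measurable_ereal_cdf_set.
- by apply: bigcapT_measurable => n; exact: measurable_ereal_cdf_set.
- by move=> m n mn; apply/subsetPset => t /= hm; exact: le_trans hm (s_ni _ _ mn).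
Qed.

Lemma cvg_ereal_cdf_nondecreasing (s : (\bar R)^nat) : nondecreasing_seq s ->
  ereal_cdf (s n) @[n --> \oo] --> P (\bigcup_n [set t | (h t)%:E <= s n]).
Proof.
move=> s_nd; apply: nondecreasing_cvg_mu.
- by move=> n; exact: measurable_ereal_cdf_set.
- by apply: bigcupT_measurable => n; exact: measurable_ereal_cdf_set.
- by move=> m n mn; apply/subsetPset => t /= hm; exact: le_trans hm (s_nd _ _ mn).
Qed.

Lemma cvg_ereal_cdf_right r :
  ereal_cdf (r + n.+1%:R^-1)%:E @[n --> \oo] --> ereal_cdf r%:E.
Proof.
have -> : ereal_cdf r%:E =
    P (\bigcap_n [set t | (h t)%:E <= (r + n.+1%:R^-1)%:E]).
  congr (P _); apply/seteqP; split => [t hr n _ /=|t hr /=].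
    by apply: le_trans hr _; rewrite lee_fin lerDl.
  rewrite lee_fin leNgt; apply/negP => /ltr_add_invr[n].
  by apply/negP; rewrite -leNgt -lee_fin; exact: hr.
apply: cvg_ereal_cdf_nonincreasing => m n mn.
by rewrite lee_fin lerD2l lef_pV2 ?posrE // ler_nat.
Qed.

Lemma cvg_ereal_cdf_Ny : ereal_cdf (- n%:R)%:E @[n --> \oo] --> 0.
Proof.
have -> : 0 = P (\bigcap_n [set t | (h t)%:E <= (- n%:R)%:E]).
  rewrite -ereal_cdfNy; congr (P _); apply/seteqP; split => [t|t hn].
    by rewrite /= leeNy_eq.
  have := hn (Num.truncn (- h t)).+1 I; rewrite /= lee_fin lerNr.
  by move=> /(lt_le_trans (truncnS_gt _)); rewrite ltxx.
apply: cvg_ereal_cdf_nonincreasing => m n mn.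
by rewrite lee_fin lerN2 ler_nat.
Qed.

Lemma cvg_ereal_cdf_y : ereal_cdf n%:R%:E @[n --> \oo] --> 1.
Proof.
have -> : 1 = P (\bigcup_n [set t | (h t)%:E <= n%:R%:E]).
  rewrite -ereal_cdfy; congr (P _); apply/seteqP; split => t _ /=; last exact: leey.
  by exists (Num.truncn (h t)).+1 => //=; rewrite lee_fin ltW // truncnS_gt.
apply: cvg_ereal_cdf_nondecreasing => m n mn.
by rewrite lee_fin ler_nat.
Qed.

Lemma cvg_ereal_cdf_left r : atomless ->
  ereal_cdf (r - n.+1%:R^-1)%:E @[n --> \oo] --> ereal_cdf r%:E.
Proof.
move=> Pna.
have -> : ereal_cdf r%:E =
    P (\bigcup_n [set t | (h t)%:E <= (r - n.+1%:R^-1)%:E]).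
  rewrite /ereal_cdf (_ : [set t | _ <= r%:E] =
     (\bigcup_n [set t | (h t)%:E <= (r - n.+1%:R^-1)%:E]) `|` [set t | h t = r]).
    rewrite measureU.
    - by rewrite -[RHS]adde0; congr (_ + _); exact: Pna.
    - by apply: bigcupT_measurable => n; exact: measurable_ereal_cdf_set.
    - exact: measurable_level_set.
    - apply/seteqP; split => // t [[n _ /=] + htr].
      by rewrite htr lee_fin lerBrDr gerDl leNgt invr_gt0 ltr0n.
  apply/seteqP; split => t /=; last first.
    by move=> [[n _ /=]|->//]; rewrite !lee_fin => /le_trans; apply; rewrite lerBlDr lerDl.
  rewrite lee_fin le_eqVlt => /predU1P[->|/ltr_add_invr[n hn]]; [by right|left].
  by exists n => //=; rewrite lee_fin lerBrDr ltW.
apply: cvg_ereal_cdf_nondecreasing => m n mn.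
by rewrite lee_fin lerD2l lerN2 lef_pV2 ?posrE // ler_nat.
Qed.

Lemma ereal_cdf_ge_right b x : x <= 1 ->
  (forall s, b < s -> x <= ereal_cdf s) -> x <= ereal_cdf b.
Proof.
move=> x1 xC; case: b xC => [r||] xC.
- apply: cvge_to_ge (cvg_ereal_cdf_right r) _; apply: nearW => n.
  by apply: xC; rewrite lte_fin ltrDl.
- by rewrite ereal_cdfy.
- rewrite ereal_cdfNy; apply: cvge_to_ge cvg_ereal_cdf_Ny _; apply: nearW => n.
  exact/xC/ltNyr.
Qed.

Lemma ereal_cdf_le_left b x : atomless -> 0 <= x ->
  (forall s, s < b -> ereal_cdf s <= x) -> ereal_cdf b <= x.
Proof.
move=> Pna x0 Cx; case: b Cx => [r||] Cx.
- apply: cvge_to_le (cvg_ereal_cdf_left r Pna) _; apply: nearW => n.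
  by apply: Cx; rewrite lte_fin ltrBlDr ltrDl.
- rewrite ereal_cdfy; apply: cvge_to_le cvg_ereal_cdf_y _; apply: nearW => n.
  exact/Cx/ltry.
- by rewrite ereal_cdfNy.
Qed.

Lemma quantile_lt0 x : (x < 0)%R -> quantile x = -oo.
Proof.
move=> x0; rewrite /quantile (_ : [set s | _] = setT) ?ereal_infT //.
apply/seteqP; split => // s _ /=.
by apply: le_trans (ereal_cdf_ge0 s); rewrite lee_fin ltW.
Qed.

Lemma quantile_gt1 x : (1 < x)%R -> quantile x = +oo.
Proof.
move=> x1; rewrite /quantile (_ : [set s | _] = set0) ?ereal_inf0 //.
apply/seteqP; split => // s /= /le_trans /(_ (ereal_cdf_le1 s)).
by rewrite lee_fin leNgt x1.
Qed.

Lemma ereal_cdf_quantile x : atomless -> x \in `[0%R, 1%R] ->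
  ereal_cdf (quantile x) = x%:E.
Proof.
rewrite in_itv /= => Pna /andP[x0 x1]; apply/le_anti/andP; split.
- apply: ereal_cdf_le_left; rewrite ?lee_fin // => s sQ.
  rewrite leNgt; apply: contraTN sQ => /ltW xC.
  by rewrite -leNgt; exact: ereal_inf_lbound.
- apply: ereal_cdf_ge_right; rewrite ?lee_fin // => s /ereal_inf_lt[s' /= xC s's].
  exact: le_trans xC (le_ereal_cdf (ltW s's)).
Qed.

Lemma ereal_cdf_le_sup x : atomless -> 0 <= x -> forall s,
  (ereal_cdf s <= x) = (s <= ereal_sup [set s | ereal_cdf s <= x]).
Proof.
move=> Pna x0 s; apply/idP/idP; first exact: ereal_sup_ubound.
move=> /le_ereal_cdf /le_trans; apply.
apply: ereal_cdf_le_left => // s' /ereal_sup_gt[s'' /= Cs'' s's''].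
exact: le_trans (le_ereal_cdf (ltW s's'')) Cs''.
Qed.

End ereal_cdf.

Section dominated.
Context {d} {T : measurableType d} {R : realType} (P1 P2 : probability T R) (h : T -> R).
Hypotheses (mh : measurable_fun setT h) (P12 : P1 `<< P2).
Local Open Scope ereal_scope.

Lemma ereal_cdf_eq_dominated s1 s2 :
  ereal_cdf P2 h s1 = ereal_cdf P2 h s2 -> ereal_cdf P1 h s1 = ereal_cdf P1 h s2.
Proof.
wlog s12 : s1 s2 / s1 <= s2.
  move=> wlog_s12; have [|/ltW s21] := leP s1 s2; first exact: wlog_s12.
  by move=> /esym /(wlog_s12 _ _ s21) /esym.
have [mA mB] := (measurable_ereal_cdf_set _ mh s1, measurable_ereal_cdf_set _ mh s2).
rewrite /ereal_cdf; set A := [set t | _ <= s1] in mA *; set B := [set t | _ <= s2] in mB *.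
move=> P2AB; have AB : A `<=` B by move=> t /= /le_trans; apply.
have BA_null : P2 (B `\` A) = 0.
  rewrite measureD // ?(setIidr AB); last by rewrite ltey_eq fin_num_measure.
  by change (P2 B - P2 A = 0); rewrite P2AB subee // fin_num_measure.
have P1BA_null : P1 (B `\` A) = 0.
  exact: (null_content_dominatesP _ _).1 P12 _ (measurableD mB mA) BA_null.
rewrite -(setDUK AB) measureU ?setDIK //; last exact: measurableD.
by change (P1 A = P1 A + P1 (B `\` A)); rewrite P1BA_null adde0.
Qed.

Lemma measure_ereal_cdf_le x : atomless P2 h ->
  P1 [set t | ereal_cdf P2 h (h t)%:E <= x%:E] = ereal_cdf P1 h (quantile P2 h x).
Proof.
move=> P2na.
have [x0|x0] := ltP x 0%R.
  rewrite quantile_lt0 // ereal_cdfNy (_ : [set t | _] = set0) ?measure0 //.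
  apply/seteqP; split => // t /= /(le_trans (ereal_cdf_ge0 _ _ _)).
  by rewrite lee_fin leNgt x0.
have [x1|x1] := ltP 1%R x.
  rewrite quantile_gt1 // ereal_cdfy // (_ : [set t | _] = setT) ?probability_setT //.
  apply/seteqP; split => // t _ /=.
  by apply: le_trans (ereal_cdf_le1 _ _ mh _) _; rewrite lee_fin ltW.
have x01 : x \in `[0%R, 1%R] by rewrite in_itv /= x0 x1.
have le_b := ereal_cdf_le_sup P2 _ mh _ P2na (x0 : 0 <= x%:E).
set b := ereal_sup _ in le_b.
rewrite (_ : [set t | _] = [set t | (h t)%:E <= b]); last first.
  by apply/seteqP; split => t /=; rewrite le_b.
apply/esym/ereal_cdf_eq_dominated/le_anti/andP; split.
- by apply: (le_ereal_cdf _ _ mh); rewrite -le_b ereal_cdf_quantile.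
- by rewrite ereal_cdf_quantile // le_b.
Qed.

End dominated.

Section equivalent.
Context {d} {T : measurableType d} {R : realType} (P1 P2 : probability T R) (h : T -> R).
Hypotheses (mh : measurable_fun setT h) (P12 : P1 `<< P2) (P21 : P2 `<< P1).
Hypotheses (P1na : atomless P1 h) (P2na : atomless P2 h).

Lemma set_bij_ereal_cdf_quantile :
  set_bij `[0, 1] `[0, 1] (fun x => fine (ereal_cdf P1 h (quantile P2 h x))).
Proof.
split.
- by move=> x _; exact: fine_ereal_cdf_itv.
- move=> x x' /set_mem /= x01 /set_mem /= x'01 Ceq.
  have : ereal_cdf P1 h (quantile P2 h x) = ereal_cdf P1 h (quantile P2 h x').
    by rewrite -[LHS]fineK ?ereal_cdf_fin_num // Ceq fineK ?ereal_cdf_fin_num.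
  by move=> /(ereal_cdf_eq_dominated _ _ _ mh P21); rewrite !ereal_cdf_quantile // => -[].
- move=> z /= z01; exists (fine (ereal_cdf P2 h (quantile P1 h z))).
    exact: fine_ereal_cdf_itv.
  rewrite (ereal_cdf_eq_dominated _ _ _ mh P12 _ (quantile P1 h z)).
    by rewrite ereal_cdf_quantile.
  by rewrite ereal_cdf_quantile ?fineK ?ereal_cdf_fin_num ?fine_ereal_cdf_itv.
Qed.

End equivalent.

Section posterior.
Context {R : realType} {dT : measure_display} {T : measurableType dT}
  {dY : measure_display} {Y : measurableType dY}.
Context (mu : {measure set T -> \bar R}) {prior : T -> R} {obs : T -> Y -> R} {y : Y}.
Hypotheses (mprior : measurable_fun setT prior) (prior_gt0 : forall t, 0 < prior t)
  (prior1 : (\int[mu]_t (prior t)%:E = 1)%E).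
Hypotheses (mobs : measurable_fun setT (obs^~ y)) (obs_gt0 : forall t, 0 < obs t y)
  (marg_fin : (pp_marg mu prior obs y < +oo)%E).

Let mjoint : measurable_fun setT (fun t => obs t y * prior t).
Proof. exact: measurable_funM. Qed.

Lemma pp_marg_gt0 : 0 < fine (pp_marg mu prior obs y).
Proof.
have joint_gt0 t : 0 < obs t y * prior t by rewrite mulr_gt0.
apply: fine_gt0; rewrite marg_fin andbT lt0e integral_ge0 ?andbT; last first.
  by move=> t _; rewrite lee_fin ltW.
apply/eqP => marg0.
have mu0 := integral_gt0_measure0 mu mjoint joint_gt0 measurableT marg0.
have := null_set_integral measurableT ((measurable_EFinP _ _).2 mprior) mu0.
by rewrite prior1 => /eqP; rewrite onee_eq0.
Qed.

Lemma measurable_pp_post : measurable_fun setT (pp_post mu prior obs ^~ y).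
Proof. by apply: measurable_funM => //; exact: measurable_cst. Qed.

Lemma pp_post_gt0 t : 0 < pp_post mu prior obs t y.
Proof. by rewrite divr_gt0 ?mulr_gt0 ?pp_marg_gt0. Qed.

Lemma integral_pp_post : (\int[mu]_t (pp_post mu prior obs t y)%:E = 1)%E.
Proof.
under eq_integral => t _ do rewrite EFinM.
rewrite ge0_integralZr //; last 3 first.
- exact/measurable_EFinP.
- by move=> t _; rewrite lee_fin mulr_ge0 // ltW.
- by rewrite lee_fin invr_ge0 ltW // pp_marg_gt0.
rewrite -[X in (X * _)%E](@fineK _ (pp_marg mu prior obs y)) -?EFinM ?divff //.
  by rewrite gt_eqF // pp_marg_gt0.
by rewrite ge0_fin_numE // integral_ge0 // => t _; rewrite lee_fin mulr_ge0 // ltW.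
Qed.

End posterior.

Section posterior_predictive.
Context {R : realType} {dT : measure_display} {T : measurableType dT}
  {dY : measure_display} {Y : measurableType dY}.
Context (mu : {measure set T -> \bar R}) {f : T -> Y -> R} {y : Y}.
Hypothesis mf : measurable_fun setT (f^~ y).

Section density.
Context {g : T -> Y -> R} (mg : measurable_fun setT (g^~ y))
  (g0 : forall t, 0 <= g t y) (g1 : (\int[mu]_t (g t y)%:E = 1)%E).
Local Notation P := (density_probability mu mg g0 g1 : probability T R).

Lemma pp_cdfE s : pp_cdf mu g f y s = fine (ereal_cdf P (f^~ y) s).
Proof. by rewrite /pp_cdf integral_indicator_density. Qed.

Lemma pp_qfE x : pp_qf mu g f y x = quantile P (f^~ y) x.
Proof.
rewrite /pp_qf; congr ereal_inf; apply/funext => s /=.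
by rewrite pp_cdfE fineK // ereal_cdf_fin_num.
Qed.

Lemma pp_atomE r : pp_atom mu g f y r = fine (P [set t | f t y = r]).
Proof.
rewrite /pp_atom integral_indicator_density; congr (fine (P _)).
by apply/seteqP; split => t /= /eqP.
Qed.

Lemma atomless_no_ties : ~ pp_has_ties mu g f -> atomless P (f^~ y).
Proof.
move=> no_ties r; apply/eqP; rewrite eq_le measure_ge0 andbT.
have [[t ftr]|no_t] := pselect (exists t, f t y = r).
  rewrite -[X in (X <= _)%E]fineK; last exact/fin_num_measure/measurable_level_set.
  rewrite lee_fin leNgt; apply/negP => atom_gt0.
  by apply: no_ties; exists y, t; rewrite pp_atomE ftr.
rewrite (_ : [set t | _] = set0) ?measure0 //.
by apply/seteqP; split => // t /= ftr; apply: no_t; exists t.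
Qed.

Lemma pp_cdf_quantile : ~ pp_has_ties mu g f ->
  (forall x : R, x \in `[0, 1] -> pp_cdf mu g f y (pp_qf mu g f y x) = x)
  /\ set_fun setT `[0, 1] (pp_cdf mu g f y)
  /\ set_surj setT `[0, 1] (pp_cdf mu g f y).
Proof.
move=> /atomless_no_ties Pna.
have cdfK x : x \in `[0, 1] -> pp_cdf mu g f y (pp_qf mu g f y x) = x.
  by move=> x01; rewrite pp_cdfE pp_qfE ereal_cdf_quantile.
split=> //; split=> [s _|x x01]; first by rewrite /= pp_cdfE; exact: fine_ereal_cdf_itv.
by exists (pp_qf mu g f y x) => //; exact: cdfK.
Qed.

Lemma pp_rkE x t : ~ pp_has_ties mu g f ->
  pp_rk mu g f x t y = ((fine (ereal_cdf P (f^~ y) (f t y)%:E) <= x)%R)%:R.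
Proof.
move=> /atomless_no_ties Pna.
have atom0 : pp_atom mu g f y (f t y) = 0 by rewrite pp_atomE Pna.
rewrite /pp_rk atom0 pp_cdfE; set c := fine (ereal_cdf _ _ _).
have [cx|xc] := leP c x.
- rewrite (_ : (_ `&` _)%classic = `[0, 1]%classic); last first.
    by apply/seteqP; split => u /=; rewrite in_itv /= mulr0 subr0; [case|split].
  by rewrite lebesgue_measure_itv /= lte_fin ltr01 oppr0 adde0.
- rewrite (_ : (_ `&` _)%classic = set0) ?measure0 //.
  by apply/seteqP; split => // u /= [_]; rewrite mulr0 subr0 leNgt xc.
Qed.

End density.

Section two_densities.
Context {prior : T -> R} {obs phi : T -> Y -> R}.
Local Notation post := (pp_post mu prior obs).
Hypotheses (mpost : measurable_fun setT (post^~ y)) (post_gt0 : forall t, 0 < post t y)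
  (post1 : (\int[mu]_t (post t y)%:E = 1)%E).
Hypotheses (mphi : measurable_fun setT (phi^~ y)) (phi_gt0 : forall t, 0 < phi t y)
  (phi1 : (\int[mu]_t (phi t y)%:E = 1)%E).

Let post0 t : 0 <= post t y. Proof. exact/ltW. Qed.
Let phi0 t : 0 <= phi t y. Proof. exact/ltW. Qed.
Local Notation Ppost := (density_probability mu mpost post0 post1 : probability T R).
Local Notation Pphi := (density_probability mu mphi phi0 phi1 : probability T R).

Let Ppost_dominated : Ppost `<< Pphi.
Proof.
exact: null_dominates_trans (density_probability_dominated _ _ mpost post0 post1)
  (density_probability_dominates _ _ mphi phi0 phi1 phi_gt0).
Qed.

Let Pphi_dominated : Pphi `<< Ppost.
Proof.
exact: null_dominates_trans (density_probability_dominated _ _ mphi phi0 phi1)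
  (density_probability_dominates _ _ mpost post0 post1 post_gt0).
Qed.

Lemma pp_qk_cdf_quantile x : ~ pp_has_ties mu phi f ->
  pp_qk mu prior obs phi f x y = pp_cdf mu post f y (pp_qf mu phi f y x).
Proof.
move=> nt_phi; rewrite /pp_qk pp_cdfE pp_qfE.
under eq_integral => t _ do rewrite (pp_rkE mphi phi0 phi1 x t nt_phi) mulrC.
rewrite integral_indicator_density.
have Pphi_atomless := atomless_no_ties mphi phi0 phi1 nt_phi.
rewrite -(measure_ereal_cdf_le Ppost Pphi _ mf Ppost_dominated _ Pphi_atomless).
congr fine; congr (_ _); apply/seteqP; split => t /=;
  by rewrite -lee_fin fineK // ereal_cdf_fin_num.
Qed.

Lemma pp_qk_bij : ~ pp_has_ties mu post f -> ~ pp_has_ties mu phi f ->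
  set_bij `[0, 1] `[0, 1] (fun x => pp_qk mu prior obs phi f x y).
Proof.
move=> nt_post nt_phi.
rewrite (_ : (fun x => _) =
    fun x => fine (ereal_cdf Ppost (f^~ y) (quantile Pphi (f^~ y) x))); last first.
  by apply/funext => x; rewrite pp_qk_cdf_quantile // pp_cdfE pp_qfE.
exact: set_bij_ereal_cdf_quantile mf Ppost_dominated Pphi_dominated
  (atomless_no_ties mpost post0 post1 nt_post) (atomless_no_ties mphi phi0 phi1 nt_phi).
Qed.

End two_densities.

End posterior_predictive.

Theorem mainTheorem11 (R : realType)
  (dT : measure_display) (T : measurableType dT)
  (dY : measure_display) (Y : measurableType dY)
  (mu : {measure set T -> \bar R}) (nu : {measure set Y -> \bar R})
  (prior : T -> R) (obs : T -> Y -> R) (phi : T -> Y -> R) (f : T -> Y -> R)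
  (* prior density on Theta (positive-valued) *)
  (prior_meas : measurable_fun setT prior)
  (prior_pos : forall t, 0 < prior t)
  (prior_int : (\int[mu]_t (prior t)%:E = 1)%E)
  (* observation density on Y (positive-valued) *)
  (obs_meas : measurable_fun setT (fun z : T * Y => obs z.1 z.2))
  (obs_pos : forall t y, 0 < obs t y)
  (obs_int : forall t, (\int[nu]_y (obs t y)%:E = 1)%E)
  (* the posterior is well defined *)
  (marg_fin : forall y, (pp_marg mu prior obs y < +oo)%E)
  (* posterior family (positive-valued) *)
  (phi_meas : measurable_fun setT (fun z : T * Y => phi z.1 z.2))
  (phi_pos : forall t y, 0 < phi t y)
  (phi_int : forall y, (\int[mu]_t (phi t y)%:E = 1)%E)
  (* test quantity *)
  (f_meas : measurable_fun setT (fun z : T * Y => f z.1 z.2)) :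
  [/\
   (* (1) *)
   (~ pp_has_ties mu (pp_post mu prior obs) f ->
    forall y : Y,
      (forall x : R, x \in `[0, 1] ->
         pp_cdf mu (pp_post mu prior obs) f y (pp_qf mu (pp_post mu prior obs) f y x) = x)
      /\ set_fun setT `[0, 1] (pp_cdf mu (pp_post mu prior obs) f y)
      /\ set_surj setT `[0, 1] (pp_cdf mu (pp_post mu prior obs) f y)),
   (* (2) *)
   (~ pp_has_ties mu phi f ->
    forall y : Y,
      (forall x : R, x \in `[0, 1] -> pp_cdf mu phi f y (pp_qf mu phi f y x) = x)
      /\ set_fun setT `[0, 1] (pp_cdf mu phi f y)
      /\ set_surj setT `[0, 1] (pp_cdf mu phi f y)) &
   (* (3) *)
   (~ pp_has_ties mu (pp_post mu prior obs) f -> ~ pp_has_ties mu phi f ->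
    forall y : Y,
      (forall x : R,
         pp_qk mu prior obs phi f x y
         = pp_cdf mu (pp_post mu prior obs) f y (pp_qf mu phi f y x))
      /\ set_bij `[0, 1] `[0, 1] (fun x => pp_qk mu prior obs phi f x y))].
Proof.
have mf y : measurable_fun setT (f^~ y) := measurable_fun_pair1 y f_meas.
have mphi y : measurable_fun setT (phi^~ y) := measurable_fun_pair1 y phi_meas.
have mobs y : measurable_fun setT (obs^~ y) := measurable_fun_pair1 y obs_meas.
have mpost y := measurable_pp_post mu prior_meas (mobs y).
have post_gt0 y :=
  pp_post_gt0 mu prior_meas prior_pos prior_int (mobs y) (obs_pos^~ y) (marg_fin y).
have post1 y :=
  integral_pp_post mu prior_meas prior_pos prior_int (mobs y) (obs_pos^~ y) (marg_fin y).
have post0 y t : 0 <= pp_post mu prior obs t y := ltW (post_gt0 y t).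
have phi0 y t : 0 <= phi t y := ltW (phi_pos t y).
split.
- move=> nt_post y.
  exact: (pp_cdf_quantile mu (mf y) (mpost y) (post0 y) (post1 y) nt_post).
- move=> nt_phi y.
  exact: (pp_cdf_quantile mu (mf y) (mphi y) (phi0 y) (phi_int y) nt_phi).
- move=> nt_post nt_phi y; split => [x|].
    exact: (pp_qk_cdf_quantile mu (mf y) (mpost y) (post_gt0 y) (post1 y)
      (mphi y) (phi_pos^~ y) (phi_int y) x nt_phi).
  exact: (pp_qk_bij mu (mf y) (mpost y) (post_gt0 y) (post1 y)
    (mphi y) (phi_pos^~ y) (phi_int y) nt_post nt_phi).
Qed.
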